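(* Consider two phases indexed by $\{1,2\}$ and a cell interface $x_{i+\frac12}$ separating a left cell $i$ and a right cell $i+1$. For $a,b\in\{1,2\}$ let $\mathcal{P}_{i+\frac12}[\Sigma_a,\Sigma_b]$ denote the probability of the event that phase $a$ is present immediately to the left of $x_{i+\frac12}$ and phase $b$ is present immediately to the right of $x_{i+\frac12}$ (exactly one phase is present on each side in every realization). Let $\alpha_j^p$, $p\in\{1,2\}$, $j\in\{i,i+1\}$, satisfy the saturation condition $\alpha_j^p\in[0,1]$, $\alpha_j^1+\alpha_j^2=1$, and assume that for every $p\neq q\in\{1,2\}$ $$\mathcal{P}_{i+\frac12}[\Sigma_p,\Sigma_p]+\mathcal{P}_{i+\frac12}[\Sigma_p,\Sigma_q]=\alpha_i^p,\qquad \mathcal{P}_{i+\frac12}[\Sigma_p,\Sigma_p]+\mathcal{P}_{i+\frac12}[\Sigma_q,\Sigma_p]=\alpha_{i+1}^p .$$ Then there exists $r\in[0,1]$, the same for $p=1$ and $p=2$, such that for every $p\neq q\in\{1,2\}$ $$\mathcal{P}_{i+\frac12}[\Sigma_p,\Sigma_p]=r\max(\alpha_i^p-\alpha_{i+1}^q,0)+(1-r)\min(\alpha_i^p,\alpha_{i+1}^p),$$ $$\mathcal{P}_{i+\frac12}[\Sigma_p,\Sigma_q]=r\min(\alpha_i^p,\alpha_{i+1}^q)+(1-r)\max(\alpha_i^p-\alpha_{i+1}^p,0).$$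
   Context: This arises in the Discrete Equation Method for two-phase flow: $\alpha_j^p$ is the (ensemble-averaged) volume fraction of phase $p$ in cell $j$, and the parameter $r$ may depend on the interface location and time but not on the phase index. The pair $(\min(\alpha_i^p,\alpha_{i+1}^p),\max(\alpha_i^p-\alpha_{i+1}^p,0))$ corresponds to stratified flow and $(\max(\alpha_i^p-\alpha_{i+1}^q,0),\min(\alpha_i^p,\alpha_{i+1}^q))$ to disperse flow. *)

From HB Require Import structures.
From mathcomp Require Import all_boot all_order all_algebra.
From mathcomp Require Import all_classical all_reals all_analysis.
Set Implicit Arguments. Unset Strict Implicit. Unset Printing Implicit Defensive.
Import Order.TTheory GRing.Theory Num.Theory.
Local Open Scope classical_set_scope.
Local Open Scope ring_scope.

(* Phases are indexed by 'I_2 (phase 1 = ord0, phase 2 = ord_max).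
   On a probability space (T, P), [lphase w] (resp. [rphase w]) is the phase
   present immediately to the left (resp. right) of the interface x_{i+1/2}
   in realization w; exactly one phase is present on each side.
   [Pint P lphase rphase a b] = P_{i+1/2}[Sigma_a, Sigma_b]. *)
Definition Pint d (T : measurableType d) (R : realType) (P : probability T R)
  (lphase rphase : T -> 'I_2) (a b : 'I_2) : R :=
  fine (P [set w | lphase w = a /\ rphase w = b]).

From HB Require Import structures.
From mathcomp Require Import all_boot all_order all_algebra.
From mathcomp Require Import all_classical all_reals all_analysis.
From mathcomp Require Import ring lra.
Set Implicit Arguments. Unset Strict Implicit.
Import Order.TTheory GRing.Theory Num.Theory.
Local Open Scope classical_set_scope.
Local Open Scope ring_scope.

(* The four interface probabilities form a 2x2 table with prescribed
   marginals, so they have one degree of freedom: the diagonal entry [m p p]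
   ranges over the Frechet interval
   [max (alpha_i^p - alpha_{i+1}^q) 0, min alpha_i^p alpha_{i+1}^p], and r is
   its position there (r = 1: disperse, r = 0: stratified).  The interval for
   phase 2 is that of phase 1 translated by exactly m 2 2 - m 1 1, so the same
   r serves both phases; the off-diagonal entries are the complements
   alpha_i^p - m p p. *)

Lemma ord2_neq_cases (p q : 'I_2) : p != q ->
  (p = ord0 /\ q = ord_max) \/ (p = ord_max /\ q = ord0).
Proof.
case: p => [[|[|//]] hp]; case: q => [[|[|//]] hq] //= _.
- by left; split; apply/val_inj.
- by right; split; apply/val_inj.
Qed.

Lemma interpolate_between (R : realFieldType) (lo x hi : R) :
  lo <= x <= hi -> exists2 r, 0 <= r <= 1 & x = r * lo + (1 - r) * hi.
Proof.
move=> /andP[lox xhi].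
have [hi_lo | hi_neq_lo] := eqVneq hi lo.
  by exists 0; [rewrite lexx ler01 | lra].
have gap_gt0 : 0 < hi - lo.
  by rewrite subr_gt0 lt_neqAle eq_sym hi_neq_lo (le_trans lox xhi).
exists ((hi - x) / (hi - lo)).
  rewrite divr_ge0 ?subr_ge0 //=; last exact: le_trans lox xhi.
  by rewrite ler_pdivrMr // mul1r; lra.
by field; rewrite gt_eqF.
Qed.

Lemma subr_max_sub0 (R : realDomainType) (x y : R) :
  x - Num.max (x - y) 0 = Num.min x y.
Proof. by case: leP => h; case: leP => h'; lra. Qed.

Lemma subr_min (R : realDomainType) (x y : R) :
  x - Num.min x y = Num.max (x - y) 0.
Proof. by case: leP => h; case: leP => h'; lra. Qed.

Lemma frechet_bounds_shift (R : realDomainType) (l0 l1 r0 r1 : R) :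
  l0 + l1 = 1 -> r0 + r1 = 1 ->
  Num.max (l1 - r0) 0 = Num.max (l0 - r1) 0 + (l1 - r0) /\
  Num.min l1 r1 = Num.min l0 r0 + (l1 - r0).
Proof. by move=> sum_l sum_r; split; case: leP => h; case: leP => h'; lra. Qed.

Section FrechetTable.
Variables (R : realFieldType) (m : 'I_2 -> 'I_2 -> R) (aL aR : 'I_2 -> R).
Hypothesis m_ge0 : forall a b, 0 <= m a b.
Hypothesis aL_sum : aL ord0 + aL ord_max = 1.
Hypothesis aR_sum : aR ord0 + aR ord_max = 1.
Hypothesis margins : forall p q, p != q ->
  m p p + m p q = aL p /\ m p p + m q p = aR p.

Lemma table_diag_bounds p q : p != q ->
  Num.max (aL p - aR q) 0 <= m p p <= Num.min (aL p) (aR p).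
Proof.
move=> neq_pq; have [rowp colp] := margins neq_pq.
have [_ colq] := @margins q p (contra_neq esym neq_pq).
have := m_ge0 p p; have := m_ge0 p q; have := m_ge0 q p; have := m_ge0 q q.
by rewrite ge_max le_min; lra.
Qed.

Lemma table_diag_shift :
  m ord_max ord_max = m ord0 ord0 + (aL ord_max - aR ord0).
Proof.
have [_ col0] := margins (isT : (ord0 : 'I_2) != ord_max).
have [row1 _] := margins (isT : (ord_max : 'I_2) != ord0).
lra.
Qed.

Lemma table_diag_interpolation :
  exists2 r, 0 <= r <= 1 & forall p q, p != q ->
    m p p = r * Num.max (aL p - aR q) 0 + (1 - r) * Num.min (aL p) (aR p).
Proof.
have [r r01 diag0] := interpolate_between (@table_diag_bounds ord0 ord_max isT).
exists r => // p q /ord2_neq_cases[[-> ->] // | [-> ->]].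
have [lo_shift hi_shift] := frechet_bounds_shift aL_sum aR_sum.
by rewrite table_diag_shift lo_shift hi_shift diag0; ring.
Qed.

Lemma table_interpolation :
  exists2 r, 0 <= r <= 1 & forall p q, p != q ->
    m p p = r * Num.max (aL p - aR q) 0 + (1 - r) * Num.min (aL p) (aR p) /\
    m p q = r * Num.min (aL p) (aR q) + (1 - r) * Num.max (aL p - aR p) 0.
Proof.
have [r r01 diag] := table_diag_interpolation.
exists r => // p q neq_pq; split; first exact: diag.
have [rowp _] := margins neq_pq.
have -> : m p q = aL p - m p p by lra.
rewrite (diag p q neq_pq).
by rewrite -(subr_max_sub0 (aL p) (aR q)) -(subr_min (aL p) (aR p)); ring.
Qed.

End FrechetTable.

Theorem theorem1 (R : realType) (d : measure_display) (T : measurableType d)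
  (P : probability T R) (lphase rphase : T -> 'I_2)
  (alphaL alphaR : 'I_2 -> R) :
  (forall a b : 'I_2, measurable [set w | lphase w = a /\ rphase w = b]) ->
  (forall p, 0 <= alphaL p <= 1) -> (forall p, 0 <= alphaR p <= 1) ->
  alphaL ord0 + alphaL ord_max = 1 -> alphaR ord0 + alphaR ord_max = 1 ->
  (forall p q : 'I_2, p != q ->
     Pint P lphase rphase p p + Pint P lphase rphase p q = alphaL p /\
     Pint P lphase rphase p p + Pint P lphase rphase q p = alphaR p) ->
  exists r : R, 0 <= r <= 1 /\
    forall p q : 'I_2, p != q ->
      Pint P lphase rphase p p =
        r * Num.max (alphaL p - alphaR q) 0 + (1 - r) * Num.min (alphaL p) (alphaR p) /\
      Pint P lphase rphase p q =
        r * Num.min (alphaL p) (alphaR q) + (1 - r) * Num.max (alphaL p - alphaR p) 0.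
Proof.
move=> _ _ _ sumL sumR margins.
have Pint_ge0 a b : 0 <= Pint P lphase rphase a b by rewrite fine_ge0.
by have [r r01 table] := table_interpolation (R := R) Pint_ge0 sumL sumR margins; exists r.
Qed.
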